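(* Let $f:[0,1]\times\mathbb{R}\to\mathbb{R}$ be continuous with continuous partial derivative $f_x$ with respect to the second variable, suppose there exist positive constants $A,B$ with $A<1$ such that $|f(t,x)|\leqslant A|x|+B$ for all $t\in[0,1]$, $x\in\mathbb{R}$, suppose $\inf_{[0,1]\times\mathbb{R}}f_x>-1$, and let $v:[0,1]\to\mathbb{R}$ be continuous. For $N\in\mathbb{N}$, $N\geqslant2$, let $x_N:\{0,\dots,N\}\to\mathbb{R}$ be the unique solution of $$\Delta^2x(k-1)=\tfrac{1}{N^2}f\left(\tfrac kN,x(k)\right)+\tfrac{1}{N^2}v\left(\tfrac kN\right),\ k=1,\dots,N-1,\qquad x(0)=x(N)=0.$$ Then there exists a constant $M>0$ such that $|x_N(k)|\leqslant M$ for every $N\geqslant2$ and every $k\in\{0,\dots,N\}$.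
   Context: $\Delta x(k-1)=x(k)-x(k-1)$, $\Delta^2x(k-1)=x(k+1)-2x(k)+x(k-1)$. *)

From Stdlib Require Import Reals Lra Lia.
From Coquelicot Require Import Coquelicot.
Open Scope R_scope.

Definition strip (p : R * R) : Prop := 0 <= fst p <= 1.
Definition unit_int (t : R) : Prop := 0 <= t <= 1.

Definition cont_on_strip (g : R -> R -> R) : Prop :=
  forall t x, 0 <= t <= 1 ->
    filterlim (fun p : R * R => g (fst p) (snd p))
      (within strip (locally (t, x))) (locally (g t x)).

Definition cont_on_unit (v : R -> R) : Prop :=
  forall t, 0 <= t <= 1 ->
    filterlim v (within unit_int (locally t)) (locally (v t)).

Definition solves_bvp (f : R -> R -> R) (v : R -> R) (N : nat) (x : nat -> R) : Prop :=
  (forall k : nat, (1 <= k)%nat -> (k <= N - 1)%nat ->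
     x (S k) - 2 * x k + x (k - 1)%nat =
       / (INR N ^ 2) * f (INR k / INR N) (x k) + / (INR N ^ 2) * v (INR k / INR N))
  /\ x 0%nat = 0 /\ x N = 0.

(** If [|Δ²x(k-1)| < K/N²] on the interior and
    [x(0) = x(N) = 0], comparing [±x] with the discrete parabola
    [K j (N - j) / (2N²)], whose second difference is exactly [-K/N²], gives
    [|x| <= K/8].  For a solution of the boundary value problem, with
    [m = max |x|] and [V] a bound for [|v|], the forcing is strictly below
    [A m + B + V + 1], so [m <= (A m + B + V + 1)/8], which bounds [m]
    independently of [N] because [A < 8]. *)

From Stdlib Require Import Reals Lra Lia.
From Coquelicot Require Import Coquelicot.
Open Scope R_scope.

Definition clamp01 (t : R) : R := Rmax 0 (Rmin 1 t).

Lemma clamp01_in (t : R) : unit_int (clamp01 t).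
Proof. unfold unit_int, clamp01, Rmax, Rmin; repeat destruct Rle_dec; lra. Qed.

Lemma clamp01_id (t : R) : 0 <= t <= 1 -> clamp01 t = t.
Proof. intros Ht; unfold clamp01, Rmax, Rmin; repeat destruct Rle_dec; lra. Qed.

Lemma clamp01_lipschitz (t s : R) : Rabs (clamp01 t - clamp01 s) <= Rabs (t - s).
Proof.
  unfold clamp01, Rmax, Rmin; repeat destruct Rle_dec;
    unfold Rabs; repeat destruct Rcase_abs; lra.
Qed.

(* [v \o clamp01] is continuous on all of [R], which turns continuity within
   [0,1] into the pointwise continuity required by [continuity_ab_maj]. *)
Lemma cont_on_unit_bounded (v : R -> R) :
  cont_on_unit v -> exists V, 0 <= V /\ forall t, 0 <= t <= 1 -> Rabs (v t) <= V.
Proof.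
  intros Hv.
  set (g := fun t => v (clamp01 t)).
  assert (Hg : forall c, 0 <= c <= 1 -> continuity_pt g c).
  { intros c _. apply continuity_pt_filterlim; unfold g.
    eapply filterlim_comp; [| apply (Hv (clamp01 c)), clamp01_in].
    intros P [eps HP]. exists eps. intros y Hy. apply HP; [| apply clamp01_in].
    eapply Rle_lt_trans; [apply clamp01_lipschitz | exact Hy]. }
  destruct (continuity_ab_maj g 0 1 ltac:(lra) Hg) as [a [Hmaj _]].
  destruct (continuity_ab_min g 0 1 ltac:(lra) Hg) as [b [Hmin _]].
  exists (Rabs (g a) + Rabs (g b)).
  split; [pose proof (Rabs_pos (g a)); pose proof (Rabs_pos (g b)); lra |].
  intros t Ht.
  specialize (Hmaj t Ht); specialize (Hmin t Ht).
  replace (v t) with (g t) by (unfold g; rewrite clamp01_id; auto).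
  unfold Rabs; repeat destruct Rcase_abs; lra.
Qed.

Lemma exists_argmax_upto (y : nat -> R) (n : nat) :
  exists k, (k <= n)%nat /\ forall j, (j <= n)%nat -> y j <= y k.
Proof.
  induction n as [| n [k [Hk Hmax]]].
  - exists 0%nat; split; [lia |]. intros j Hj; replace j with 0%nat by lia; lra.
  - destruct (Rle_dec (y (S n)) (y k)).
    + exists k; split; [lia |]. intros j Hj.
      destruct (Nat.eq_dec j (S n)); [subst; lra | apply Hmax; lia].
    + exists (S n); split; [lia |]. intros j Hj.
      destruct (Nat.eq_dec j (S n)); [subst; lra |].
      specialize (Hmax j ltac:(lia)); lra.
Qed.

Lemma discrete_max_principle (N : nat) (y : nat -> R) :
  (forall k, (1 <= k)%nat -> (k <= N - 1)%nat -> 0 < y (S k) - 2 * y k + y (k - 1)%nat) ->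
  y 0%nat <= 0 -> y N <= 0 -> forall k, (k <= N)%nat -> y k <= 0.
Proof.
  intros Hconvex H0 HN k Hk.
  destruct (exists_argmax_upto y N) as [m [Hm Hmax]].
  assert (Hym : y m <= 0).
  { destruct (Nat.eq_dec m 0); [subst; lra |].
    destruct (Nat.eq_dec m N); [subst; lra |].
    specialize (Hconvex m ltac:(lia) ltac:(lia)).
    pose proof (Hmax (S m) ltac:(lia)); pose proof (Hmax (m - 1)%nat ltac:(lia)); lra. }
  specialize (Hmax k Hk); lra.
Qed.

Definition tent (N : nat) (K : R) (j : nat) : R :=
  K * INR j * (INR N - INR j) / (2 * INR N ^ 2).

Lemma tent_0 (N : nat) (K : R) : tent N K 0 = 0.
Proof. unfold tent; simpl; unfold Rdiv; ring. Qed.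

Lemma tent_N (N : nat) (K : R) : tent N K N = 0.
Proof. unfold tent, Rdiv; ring. Qed.

Lemma tent_second_diff (N : nat) (K : R) (j : nat) :
  (1 <= N)%nat -> (1 <= j)%nat ->
  tent N K (S j) - 2 * tent N K j + tent N K (j - 1)%nat = - (K / INR N ^ 2).
Proof.
  intros HN Hj. assert (0 < INR N) by (apply lt_0_INR; lia).
  unfold tent. rewrite S_INR, minus_INR by lia. simpl INR. field. lra.
Qed.

Lemma tent_le_eighth (N : nat) (K : R) (j : nat) :
  (1 <= N)%nat -> 0 <= K -> tent N K j <= K / 8.
Proof.
  intros HN HK. unfold tent. set (n := INR N); set (a := INR j).
  assert (Hn : 0 < n) by (apply lt_0_INR; lia).
  replace (K * a * (n - a) / (2 * n ^ 2))
    with (K / 8 - K * ((n - 2 * a) ^ 2 / (8 * n ^ 2))) by (field; lra).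
  assert (Hq : 0 <= (n - 2 * a) ^ 2 / (8 * n ^ 2)).
  { apply Rdiv_le_0_compat; [apply pow2_ge_0 | simpl; nra]. }
  pose proof (Rmult_le_pos _ _ HK Hq); lra.
Qed.

Lemma dirichlet_sup_bound (N : nat) (K : R) (x : nat -> R) :
  (1 <= N)%nat -> 0 <= K ->
  (forall k, (1 <= k)%nat -> (k <= N - 1)%nat ->
     Rabs (x (S k) - 2 * x k + x (k - 1)%nat) < K / INR N ^ 2) ->
  x 0%nat = 0 -> x N = 0 -> forall k, (k <= N)%nat -> Rabs (x k) <= K / 8.
Proof.
  intros HN HK Hforce H0 HxN k Hk.
  assert (Hup : x k - tent N K k <= 0).
  { apply (discrete_max_principle N (fun j => x j - tent N K j)); auto;
      [| rewrite H0, tent_0; lra | rewrite HxN, tent_N; lra].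
    intros j Hj1 Hj2.
    pose proof (Hforce j Hj1 Hj2) as Hj. pose proof (tent_second_diff N K j HN Hj1).
    apply Rabs_def2 in Hj; lra. }
  assert (Hlo : - x k - tent N K k <= 0).
  { apply (discrete_max_principle N (fun j => - x j - tent N K j)); auto;
      [| rewrite H0, tent_0; lra | rewrite HxN, tent_N; lra].
    intros j Hj1 Hj2.
    pose proof (Hforce j Hj1 Hj2) as Hj. pose proof (tent_second_diff N K j HN Hj1).
    apply Rabs_def2 in Hj; lra. }
  pose proof (tent_le_eighth N K k HN HK).
  unfold Rabs; destruct Rcase_abs; lra.
Qed.

Lemma grid_point_in_unit (N j : nat) :
  (1 <= N)%nat -> (j <= N)%nat -> 0 <= INR j / INR N <= 1.
Proof.
  intros HN Hj. assert (0 < INR N) by (apply lt_0_INR; lia).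
  assert (INR j <= INR N) by (apply le_INR; lia).
  split; [apply Rdiv_le_0_compat; [apply pos_INR | lra] |].
  apply Rmult_le_reg_r with (INR N); [lra |].
  unfold Rdiv; rewrite Rmult_assoc, Rinv_l; lra.
Qed.

Theorem lemma12
  (f : R -> R -> R) (fx : R -> R -> R) (v : R -> R) (A B : R)
  (xs : nat -> nat -> R)
  (Hf : cont_on_strip f)
  (Hfx_der : forall t y, 0 <= t <= 1 -> is_derive (fun z => f t z) y (fx t y))
  (Hfx_cont : cont_on_strip fx)
  (HA : 0 < A) (HA1 : A < 1) (HB : 0 < B)
  (Hgrowth : forall t y, 0 <= t <= 1 -> Rabs (f t y) <= A * Rabs y + B)
  (Hinf : exists c, -1 < c /\ forall t y, 0 <= t <= 1 -> c <= fx t y)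
  (Hv : cont_on_unit v)
  (Hsol : forall N : nat, (2 <= N)%nat -> solves_bvp f v N (xs N)) :
  exists M, 0 < M /\
    forall N k : nat, (2 <= N)%nat -> (k <= N)%nat -> Rabs (xs N k) <= M.
Proof.
  destruct (cont_on_unit_bounded v Hv) as [V [HV0 HV]].
  exists ((B + V + 1) / (8 - A)). split; [apply Rdiv_lt_0_compat; lra |].
  intros N k HN Hk.
  destruct (Hsol N HN) as [Heq [H0 HxN]].
  set (x := xs N) in *.
  destruct (exists_argmax_upto (fun j => Rabs (x j)) N) as [k0 [Hk0 Hmax]]; simpl in Hmax.
  set (m := Rabs (x k0)) in *.
  assert (HN2 : 0 < INR N ^ 2) by (apply pow_lt, lt_0_INR; lia).
  assert (Hforce : forall j, (1 <= j)%nat -> (j <= N - 1)%nat ->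
            Rabs (x (S j) - 2 * x j + x (j - 1)%nat) < (A * m + B + V + 1) / INR N ^ 2).
  { intros j Hj1 Hj2. rewrite Heq by assumption.
    pose proof (grid_point_in_unit N j ltac:(lia) ltac:(lia)) as Ht.
    pose proof (Hgrowth _ (x j) Ht); pose proof (HV _ Ht).
    pose proof (Rmult_le_compat_l A _ _ (Rlt_le _ _ HA) (Hmax j ltac:(lia))).
    rewrite <- Rmult_plus_distr_l, Rabs_mult, Rabs_inv, Rabs_right by lra.
    unfold Rdiv; rewrite Rmult_comm.
    apply Rmult_lt_compat_r; [apply Rinv_0_lt_compat; lra |].
    eapply Rle_lt_trans; [apply Rabs_triang | lra]. }
  assert (Hm : m <= (A * m + B + V + 1) / 8).
  { apply (dirichlet_sup_bound N _ x ltac:(lia)); auto.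
    pose proof (Rmult_le_pos A m (Rlt_le _ _ HA) (Rabs_pos _)); lra. }
  eapply Rle_trans; [apply (Hmax k Hk) |].
  apply Rmult_le_reg_r with (8 - A); [lra |].
  unfold Rdiv; rewrite Rmult_assoc, Rinv_l; lra.
Qed.
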